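(* Let $P$ be a $6\times 6$ unitary pattern that has a row $r$ of weight $4$ and no row of weight $5$ or more. Then at least one of the following holds: (i) there is another row of $P$ of weight $4$ with the same support as $r$, and there is a row of $P$ of weight $2$ whose support is contained in the support of $r$; or (ii) $P$ has at least four rows (counting $r$) of weight at least $3$. In both cases, $P$ has at least four rows of weight at least $2$.
   Context: The pattern of a complex matrix is the $0/1$ matrix obtained by replacing each nonzero entry by $1$. A unitary pattern is a $0/1$ matrix that is the pattern of some unitary matrix. For a row of a $0/1$ matrix, its support is the set of column indices where it has a $1$, and its weight is the number of its ones. *)

From HB Require Import structures.
From mathcomp Require Import all_boot all_order all_algebra.
From mathcomp Require Import complex.
From mathcomp Require Import Rstruct.
From Stdlib Require Import Reals.
Set Implicit Arguments. Unset Strict Implicit. Unset Printing Implicit Defensive.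
Import Order.TTheory GRing.Theory Num.Theory.
Local Open Scope ring_scope.

Definition CC : numClosedFieldType := (Rdefinitions.R)[i].

Definition unitary_mx (n : nat) (U : 'M[CC]_n) : Prop :=
  U *m (map_mx Num.conj U)^T = 1%:M.

Definition pattern (m n : nat) (U : 'M[CC]_(m, n)) : 'M[bool]_(m, n) :=
  \matrix_(i, j) (U i j != 0).

Definition unitary_pattern (n : nat) (P : 'M[bool]_n) : Prop :=
  exists U : 'M[CC]_n, unitary_mx U /\ pattern U = P.

Definition row_support (m n : nat) (P : 'M[bool]_(m, n)) (i : 'I_m) : {set 'I_n} :=
  [set j | P i j].

Definition row_weight (m n : nat) (P : 'M[bool]_(m, n)) (i : 'I_m) : nat :=
  #|row_support P i|.

From mathcomp Require Import all_boot all_order all_algebra.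
From mathcomp Require Import zify.
Set Implicit Arguments. Unset Strict Implicit. Unset Printing Implicit Defensive.
Import Order.TTheory GRing.Theory Num.Theory.

(* Orthogonality of two rows (or two columns) of a unitary matrix forbids them
   from meeting in exactly one position, and comparing the squared norms of a
   set of rows with those of the columns carrying their supports shows that
   rows supported inside k columns are at most k in number.  Rows of weight at
   most 2 are therefore either 2-subsets of the support of r or avoid it, and
   at most two avoid it.  Given a 2-subset s, let c, d be the other columns of
   r.  Columns a (in s) and c meet in r, hence in a second row y, which then
   contains s and c; likewise some row z contains s and d.  If y contains d or
   z contains c, that row has the support of r.  Otherwise a second row u
   through c and d is either a fourth heavy row besides r, y, z, or equals
   {c, d} and meets y only in c. *)

Section SumSupport.
Local Open Scope ring_scope.

Lemma sum_eq0_card_support_neq1 (V : nmodType) (I : finType) (f : I -> V) :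
  \sum_i f i = 0 -> #|[set i | f i != 0]| != 1%N.
Proof.
move=> sum_f0; apply/negP => /cards1P [c supp_f].
have supp_fE k : (f k != 0) = (k == c) by rewrite -in_set1 -supp_f inE.
move: sum_f0; rewrite (bigD1 c) //= big1 ?addr0 => [/eqP|k k_neq_c].
  by rewrite -[_ == 0]negbK supp_fE eqxx.
by apply/eqP; rewrite -[_ == 0]negbK supp_fE (negPf k_neq_c).
Qed.

End SumSupport.

Lemma card_neq1_other (T : finType) (X : {set T}) x :
  x \in X -> #|X| != 1 -> exists2 y, y \in X & y != x.
Proof.
move=> xX X_neq1; have /card_gt0P [y] : 0 < #|X :\ x|.
  by move: X_neq1; rewrite (cardsD1 x) xX; case: #|X :\ x|.
by rewrite !inE => /andP [y_neq_x yX]; exists y.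
Qed.

Lemma meet_neq1_subset (T : finType) (X Y : {set T}) :
  #|Y| <= 2 -> 0 < #|X :&: Y| -> #|X :&: Y| != 1 -> Y \subset X /\ #|Y| = 2.
Proof.
move=> Y_le2 XY_gt0 XY_neq1.
have XY_leY : #|X :&: Y| <= #|Y| by rewrite subset_leq_card ?subsetIr.
have XY_Y : X :&: Y == Y by rewrite eqEcard subsetIr; lia.
by split; [rewrite -(eqP XY_Y) subsetIl | lia].
Qed.

Section UnitaryPattern.
Variables (n : nat) (U : 'M[CC]_n).
Hypothesis U_unitary : unitary_mx U.
Local Notation S := (row_support (pattern U)).
Local Open Scope ring_scope.

Lemma unitary_row_dot (i j : 'I_n) : \sum_k U i k * (U j k)^* = (i == j)%:R.
Proof.
have := congr1 (fun M : 'M_n => M i j) U_unitary; rewrite /= !mxE => <-.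
by apply: eq_bigr => k _; rewrite !mxE.
Qed.

Lemma unitary_col_dot (p q : 'I_n) : \sum_k (U k p)^* * U k q = (p == q)%:R.
Proof.
have := congr1 (fun M : 'M_n => M p q) (mulmx1C U_unitary); rewrite /= !mxE => <-.
by apply: eq_bigr => k _; rewrite !mxE.
Qed.

Lemma unitary_rows_meet_neq1 (i j : 'I_n) : i != j -> #|S i :&: S j| != 1%N.
Proof.
move=> i_neq_j; have -> : S i :&: S j = [set k | U i k * (U j k)^* != 0].
  by apply/setP => k; rewrite !inE !mxE mulf_eq0 conjC_eq0 negb_or.
by apply: sum_eq0_card_support_neq1; rewrite unitary_row_dot (negPf i_neq_j).
Qed.

Lemma unitary_cols_meet_neq1 (p q : 'I_n) :
  p != q -> #|[set i | pattern U i p && pattern U i q]| != 1%N.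
Proof.
move=> p_neq_q.
have -> : [set i | pattern U i p && pattern U i q] = [set k | (U k p)^* * U k q != 0].
  by apply/setP => k; rewrite !inE !mxE mulf_eq0 conjC_eq0 negb_or.
by apply: sum_eq0_card_support_neq1; rewrite unitary_col_dot (negPf p_neq_q).
Qed.

Lemma unitary_rows_within_card (I J : {set 'I_n}) :
  (forall i, i \in I -> S i \subset J) -> (#|I| <= #|J|)%N.
Proof.
move=> IJ; rewrite -(ler_nat CC).
have norm_rows : (#|I|%:R : CC) = \sum_(i in I) \sum_(k in J) U i k * (U i k)^*.
  rewrite -sum1_card natr_sum; apply: eq_bigr => i iI.
  have <- : \sum_k U i k * (U i k)^* = 1 by rewrite unitary_row_dot eqxx.
  rewrite (bigID (mem J)) /= mulr1n.
  suff -> : \sum_(k < n | k \notin J) U i k * (U i k)^* = 0 by rewrite addr0.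
  apply: big1 => k kJ; have : k \notin S i.
    by apply: contra kJ; apply: subsetP; apply: IJ.
  by rewrite !inE !mxE negbK => /eqP ->; rewrite mul0r.
have norm_cols : (#|J|%:R : CC) = \sum_(k in J) \sum_i U i k * (U i k)^*.
  rewrite -sum1_card natr_sum; apply: eq_bigr => k kJ.
  have <- : \sum_i (U i k)^* * U i k = 1 by rewrite unitary_col_dot eqxx.
  by rewrite mulr1n; apply: eq_bigr => i _; rewrite mulrC.
rewrite norm_rows norm_cols exchange_big /=; apply: ler_sum => k kJ.
rewrite (@big_mkcond CC) /=; apply: ler_sum => i _.
by case: (i \in I) => //; apply: mul_conjC_ge0.
Qed.

End UnitaryPattern.

Section SixBySixPattern.
Variables (P : 'M[bool]_6) (r : 'I_6).
Local Notation A := (row_support P).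
Local Notation w := (row_weight P).
Local Notation heavy_rows := [set i | 3 <= w i].
Hypothesis rows_meet : forall i j, i != j -> #|A i :&: A j| != 1.
Hypothesis cols_meet : forall p q : 'I_6, p != q -> #|[set i | P i p && P i q]| != 1.
Hypothesis rows_within : forall I J : {set 'I_6},
  (forall i, i \in I -> A i \subset J) -> #|I| <= #|J|.
Hypothesis w_r : w r = 4.

Lemma card_setC_support_r : #|~: A r| = 2.
Proof. by have := cardsC (A r); rewrite card_ord -/(w r) w_r => /addnI. Qed.

Lemma light_row_dichotomy i :
  w i <= 2 -> A i \subset ~: A r \/ (w i = 2 /\ A i \subset A r).
Proof.
move=> w_i; have r_neq_i : r != i by apply: contraTneq w_i => <-; rewrite w_r.
case: (posnP #|A r :&: A i|) => [/eqP | meet_pos].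
  by rewrite cards_eq0 setI_eq0 disjoint_sym disjoints_subset; left.
by right; have [] := meet_neq1_subset w_i meet_pos (rows_meet r_neq_i).
Qed.

Lemma light_rows_card_le2 (I : {set 'I_6}) :
  (forall i, i \in I -> w i <= 2 /\ ~ (w i = 2 /\ A i \subset A r)) -> #|I| <= 2.
Proof.
move=> I_light; rewrite -[X in _ <= X]card_setC_support_r; apply: rows_within => i.
by case/I_light => w_i not_pair; case: (light_row_dichotomy w_i).
Qed.

Lemma four_rows_weight_ge2 : 4 <= #|[set i | 2 <= w i]|.
Proof.
have few_light : #|[set i | w i < 2]| <= 2.
  by apply: light_rows_card_le2 => i; rewrite inE => w_i; split=> [|[]]; lia.
have := cardsC [set i | 2 <= w i]; rewrite card_ord.
have -> : ~: [set i | 2 <= w i] = [set i | w i < 2].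
  by apply/setP => i; rewrite !inE -ltnNge.
lia.
Qed.

Lemma pair_row_exists :
  #|heavy_rows| < 4 -> exists s, w s = 2 /\ A s \subset A r.
Proof.
move=> few_heavy.
case: (boolP [exists s, (w s == 2) && (A s \subset A r)]).
  by case/existsP => s /andP [/eqP w_s s_sub]; exists s.
move/existsPn => no_pair; have : #|~: heavy_rows| <= 2.
  apply: light_rows_card_le2 => i; rewrite !inE -ltnNge ltnS => w_i.
  by split=> // -[/eqP w_s s_sub]; move: (no_pair i); rewrite w_s s_sub.
by have := cardsC heavy_rows; rewrite card_ord; lia.
Qed.

Lemma row_through_pair_and s c :
  w s = 2 -> A s \subset A r -> c \in A r -> c \notin A s ->
  exists y, [/\ y != r, c \in A y, A s \subset A y & 3 <= w y].
Proof.
move=> w_s s_sub c_r c_s.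
have /card_gt0P [a a_s] : 0 < w s by rewrite w_s.
have a_neq_c : a != c by apply: contraNneq c_s => <-.
have r_ac : r \in [set i | P i a && P i c].
  by move: (subsetP s_sub a a_s) c_r; rewrite !inE => -> ->.
have [y] := card_neq1_other r_ac (cols_meet a_neq_c).
rewrite inE => /andP [Pya Pyc] y_neq_r.
have y_neq_s : y != s by apply: contraNneq c_s => <-; rewrite inE.
have meet_pos : 0 < #|A y :&: A s|.
  by apply/card_gt0P; exists a; rewrite in_setI a_s inE Pya.
have [s_sub_y _] := meet_neq1_subset (eq_leq w_s) meet_pos (rows_meet y_neq_s).
exists y; split => //; first by rewrite inE.
have /subset_leq_card : c |: A s \subset A y by rewrite subUset sub1set inE Pyc.
by rewrite cardsU1 c_s -/(w s) w_s.
Qed.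

Lemma four_heavy_rows y z c d :
  y != r -> z != r -> 3 <= w y -> 3 <= w z -> c != d -> c \in A r -> d \in A r ->
  c \in A y -> d \notin A y -> d \in A z -> c \notin A z -> 4 <= #|heavy_rows|.
Proof.
move=> y_neq_r z_neq_r w_y w_z c_neq_d c_r d_r c_y d_y d_z c_z.
have r_cd : r \in [set i | P i c && P i d] by move: c_r d_r; rewrite !inE => -> ->.
have [u] := card_neq1_other r_cd (cols_meet c_neq_d).
rewrite inE => /andP [Puc Pud] u_neq_r.
have u_neq_y : u != y by apply: contraNneq d_y => <-; rewrite inE.
have u_neq_z : u != z by apply: contraNneq c_z => <-; rewrite inE.
have y_neq_z : y != z by apply: contraNneq c_z => <-.
case: (leqP 3 (w u)) => w_u.
  have /subset_leq_card : r |: (y |: (z |: [set u])) \subset heavy_rows.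
    by apply/subsetP => x; rewrite !inE => /or4P[] /eqP ->; rewrite ?w_r.
  rewrite !cardsU1 cards1 !inE ![r == _]eq_sym ![_ == u]eq_sym.
  by rewrite (negPf y_neq_r) (negPf z_neq_r) (negPf u_neq_r) (negPf y_neq_z)
             (negPf u_neq_y) (negPf u_neq_z).
have A_u : A u = [set c; d].
  apply/esym/eqP; rewrite eqEcard cards2 c_neq_d subUset !sub1set !inE Puc Pud.
  by rewrite -ltnS.
have /negP[] := rows_meet u_neq_y; rewrite A_u; apply/cards1P; exists c.
move: c_y d_y; rewrite !inE => Pyc Pyd_neg; apply/setP => x; rewrite !inE.
case: (eqVneq x c) => [-> | _]; first by rewrite Pyc.
by case: (eqVneq x d) => [-> | _]; rewrite ?(negPf Pyd_neg).
Qed.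

Hypothesis w_max : forall i, w i <= 4.

Lemma pair_row_twin_or_four_heavy s : w s = 2 -> A s \subset A r ->
  (exists2 t, t != r & A t = A r) \/ 4 <= #|heavy_rows|.
Proof.
move=> w_s s_sub.
have /eqP/cards2P [c [d [c_neq_d rest_r]]] : #|A r :\: A s| = 2.
  by rewrite cardsD (setIidPr s_sub) -/(w s) -/(w r) w_s w_r.
have : c \in A r :\: A s by rewrite rest_r !inE eqxx.
rewrite inE => /andP [c_s c_r].
have : d \in A r :\: A s by rewrite rest_r !inE eqxx orbT.
rewrite inE => /andP [d_s d_r].
have twin t : t != r -> A s \subset A t -> c \in A t -> d \in A t ->
    (exists2 t, t != r & A t = A r) \/ 4 <= #|heavy_rows|.
  move=> t_neq_r s_t c_t d_t; left; exists t => //; apply/esym/eqP.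
  rewrite eqEcard -/(w t) -/(w r) w_r w_max andbT.
  apply/subsetP => x x_r; case: (boolP (x \in A s)) => [/(subsetP s_t) // | x_s].
  have : x \in A r :\: A s by rewrite inE x_s x_r.
  by rewrite rest_r => /set2P [] ->.
have [y [y_neq_r c_y s_y w_y]] := row_through_pair_and w_s s_sub c_r c_s.
have [z [z_neq_r d_z s_z w_z]] := row_through_pair_and w_s s_sub d_r d_s.
have [d_y | d_y] := boolP (d \in A y); first exact: twin y_neq_r s_y c_y d_y.
have [c_z | c_z] := boolP (c \in A z); first exact: twin z_neq_r s_z c_z d_z.
by right; apply: (four_heavy_rows y_neq_r z_neq_r w_y w_z c_neq_d).
Qed.

End SixBySixPattern.

Theorem mainTheorem5 (P : 'M[bool]_6) (r : 'I_6) :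
  unitary_pattern P ->
  row_weight P r = 4 ->
  (forall i : 'I_6, row_weight P i <= 4) ->
  ((exists r' : 'I_6, [/\ r' != r, row_weight P r' = 4 &
                          row_support P r' = row_support P r] /\
    exists s : 'I_6, row_weight P s = 2 /\ row_support P s \subset row_support P r)
   \/ 4 <= #|[set i : 'I_6 | 3 <= row_weight P i]|)
  /\ 4 <= #|[set i : 'I_6 | 2 <= row_weight P i]|.
Proof.
move=> [U [U_unitary <-]] w_r w_max.
have rows_meet := unitary_rows_meet_neq1 U_unitary.
have cols_meet := unitary_cols_meet_neq1 U_unitary.
have rows_within := unitary_rows_within_card U_unitary.
split; last exact: four_rows_weight_ge2 rows_meet rows_within w_r.
have [|few_heavy] := leqP 4 #|[set i | 3 <= row_weight (pattern U) i]|; first by right.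
have [s [w_s s_sub]] := pair_row_exists rows_meet rows_within w_r few_heavy.
have [[t t_neq_r A_t] | many_heavy] :=
  pair_row_twin_or_four_heavy rows_meet cols_meet w_r w_max w_s s_sub.
  by left; exists t; split; [split; rewrite /row_weight ?A_t | exists s].
by rewrite leqNgt few_heavy in many_heavy.
Qed.
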